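(* Let $\Gamma$ and $\Xi$ be as in the context. For any $\gamma,\gamma_1,\gamma_2\in\Gamma$ and $\xi_1,\xi_2\in\Xi$, $$d_o^2(\gamma_1\xi_1\infty,\gamma_2\xi_2\infty)\,\tilde h(\gamma_1\xi_1\infty)\,\tilde h(\gamma_2\xi_2\infty)=d_o^2(\gamma\gamma_1\xi_1\infty,\gamma\gamma_2\xi_2\infty)\,\tilde h(\gamma\gamma_1\xi_1\infty)\,\tilde h(\gamma\gamma_2\xi_2\infty).$$
   Context: $n\ge2$, $G=\mathrm{SO}(n,1)$, $K\cong\mathrm{SO}(n)$ maximal compact, $\mathbb H^n=G/K$ with hyperbolic distance $d$, $o=K$. $A$ a one-parameter $\mathbb R$-split torus, $M=Z_G(A)\cap K$, $N$ the expanding horospherical subgroup, $P=MAN$; $\partial\mathbb H^n=G/P\cong\mathbb R^{n-1}\cup\{\infty\}$ with $\infty=P$. $\Gamma\subset G$ discrete with finite covolume and $\Xi\subset G$ a finite set (containing $e$) of cusp representatives; $\gamma\xi\infty$ are the cusps. Busemann function: $B_\zeta(x,y)=\lim_{t\to\infty}(d(x,\zeta(t))-d(y,\zeta(t)))$ for a geodesic ray $\zeta(t)\to\zeta$. Busemann height: $\tilde h(\gamma\xi\infty)=\exp(B_{\xi\infty}(\gamma^{-1}o,o))$ (defined via the pair $(\gamma,\xi)$). Gromov metric: $d_o(\zeta_1,\zeta_2)=\exp\big(-\tfrac12\lim_{t\to\infty}(B_{\zeta_1}(o,\zeta(t))+B_{\zeta_2}(o,\zeta(t)))\big)$ with $\zeta(t)$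 a geodesic ray converging to $\zeta_1$. *)

From HB Require Import structures.
From mathcomp Require Import all_boot all_order all_algebra.
From mathcomp Require Import all_classical all_reals all_analysis.
Set Implicit Arguments. Unset Strict Implicit. Unset Printing Implicit Defensive.
Import Order.TTheory GRing.Theory Num.Theory.
Local Open Scope classical_set_scope.
Local Open Scope ring_scope.

Section Hyperbolic.
Variables (R : realType) (n : nat).
(* Ambient Minkowski space R^{n,1} = column vectors of size n+1;
   the last coordinate (index n = ord_max) is the time coordinate. *)
Definition tidx : 'I_n.+1 := ord_max.

Definition Jmx : 'M[R]_(n.+1) := diag_mx (\row_i (if i == tidx then -1 else 1)).

Definition mink (x y : 'cV[R]_(n.+1)) : R := (x^T *m Jmx *m y) 0 0.

(* base point o = e_n, the point of H^n fixed by K = SO(n) *)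
Definition hpt_o : 'cV[R]_(n.+1) := delta_mx tidx 0.

Definition in_hyp (x : 'cV[R]_(n.+1)) : Prop := mink x x = -1 /\ 0 < x tidx 0.

Definition hcosh (t : R) : R := (expR t + expR (- t)) / 2.
Definition hsinh (t : R) : R := (expR t - expR (- t)) / 2.
Definition hacosh (t : R) : R := ln (t + Num.sqrt (t ^+ 2 - 1)).

Definition hdist (x y : 'cV[R]_(n.+1)) : R := hacosh (- mink x y).

(* G = SO(n,1) (identity component, G/K = H^n with K = Stab(o) = SO(n)) *)
Definition inG (g : 'M[R]_(n.+1)) : Prop :=
  g^T *m Jmx *m g = Jmx /\ \det g = 1 /\ 0 < g tidx tidx.

(* boundary points: future null vectors (a boundary point is the ray R_{>0} v;
   all quantities below are invariant under positive rescaling of v) *)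
Definition in_bdry (v : 'cV[R]_(n.+1)) : Prop := mink v v = 0 /\ 0 < v tidx 0.

(* unit-speed geodesic ray starting at x in H^n and converging to the
   boundary point [v] *)
Definition gray (x v : 'cV[R]_(n.+1)) (t : R) : 'cV[R]_(n.+1) :=
  hcosh t *: x + hsinh t *: ((- mink x v)^-1 *: v - x).

Definition busemann (v x y : 'cV[R]_(n.+1)) : R :=
  lim ((fun t : R => hdist x (gray hpt_o v t) - hdist y (gray hpt_o v t)) @ +oo).

(* Gromov metric d_o([v1],[v2]) = exp(-1/2 lim_{t->oo} (B_{v1}(o,zeta(t)) + B_{v2}(o,zeta(t)))),
   zeta the geodesic ray from o to [v1]; the limit is taken in the extended
   reals (it is +oo when [v1] = [v2], giving d_o = 0). *)
Definition gromov (v1 v2 : 'cV[R]_(n.+1)) : R :=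
  fine (expeR (- (lim ((fun t : R =>
          (busemann v1 hpt_o (gray hpt_o v1 t) + busemann v2 hpt_o (gray hpt_o v1 t))%:E)
          @ +oo%R)) * (2^-1)%:E)%E).

(* Busemann height of the cusp gamma xi infty, defined via the pair (gamma, xi):
   h(gamma xi oo) = exp(B_{xi oo}(gamma^{-1} o, o)) *)
Definition bheight (inf : 'cV[R]_(n.+1)) (g xi : 'M[R]_(n.+1)) : R :=
  expR (busemann (xi *m inf) (invmx g *m hpt_o) hpt_o).

Definition subgroupG (Gam : set 'M[R]_(n.+1)) : Prop :=
  (forall g, Gam g -> inG g) /\ Gam 1%:M /\
  (forall g h, Gam g -> Gam h -> Gam (g *m h)) /\
  (forall g, Gam g -> Gam (invmx g)).

Definition discrete_set (Gam : set 'M[R]_(n.+1)) : Prop :=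
  forall g, Gam g -> exists2 e : R, 0 < e &
    forall h, Gam h -> (forall i j, `|h i j - g i j| < e) -> h = g.

End Hyperbolic.

(* In the hyperboloid model a boundary point is a future null ray [v], and the
   Busemann function is a log-ratio of Minkowski products,
   B_[v](x, y) = ln (-<x,v>) - ln (-<y,v>).  Hence the height of the cusp
   g xi oo is (g w)_t / w_t for w = xi oo, and d_o([v1],[v2])^2 =
   -<v1,v2> / (2 (v1)_t (v2)_t).  In the product on either side of the
   identity the time components of g1 w1 and g2 w2 cancel, leaving
   -<g1 w1, g2 w2> / (2 (w1)_t (w2)_t), which does not change when g1, g2 are
   replaced by g g1, g g2 since g preserves the Minkowski form. *)
From HB Require Import structures.
From mathcomp Require Import all_boot all_order all_algebra.
From mathcomp Require Import all_classical all_reals all_analysis.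
From mathcomp Require Import ring lra.
Import Order.TTheory GRing.Theory Num.Theory numFieldNormedType.Exports.
Local Open Scope classical_set_scope.
Local Open Scope ring_scope.

Section Hyperboloid.
Variables (R : realType) (n : nat).
Implicit Types (s : R -> R) (a b c q t : R).

Lemma hcoshE t : hcosh t = expR (- t) + hsinh t.
Proof. rewrite /hcosh /hsinh; lra. Qed.

Lemma hsinh_gt0 t : 0 < t -> 0 < hsinh t.
Proof. by move=> t0; rewrite /hsinh divr_gt0 // subr_gt0 ltr_expR; lra. Qed.

Lemma hsinh_mulexpRN t : hsinh t * expR (- t) = (1 - expR (- t) ^+ 2) / 2.
Proof.
have ee : expR t * expR (- t) = 1 by rewrite -expRD subrr expR0.
by rewrite /hsinh -ee; ring.
Qed.

Lemma cvg_expRN_sqr : expR (- t) ^+ 2 @[t --> +oo] --> (0 : R).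
Proof.
rewrite -(mulr0 0); under eq_fun do rewrite expr2.
by apply: cvgM; exact: cvgr_expR.
Qed.

Lemma cvg_hsinh_mulexpRN : hsinh t * expR (- t) @[t --> +oo] --> (2^-1 : R).
Proof.
under eq_fun do rewrite hsinh_mulexpRN.
suff : (1 - expR (- t) ^+ 2) / 2 @[t --> +oo] --> ((1 - 0) / 2 : R).
  by rewrite subr0 mul1r.
exact: cvgMl (cvgB (cvg_cst _) cvg_expRN_sqr).
Qed.

Lemma cvg_hsinh_comb a b :
  (a * expR (- t) + b * hsinh t) * expR (- t) @[t --> +oo] --> b / 2.
Proof.
under eq_fun do rewrite mulrDl -(mulrA a) -expr2 -(mulrA b).
suff : a * expR (- t) ^+ 2 + b * (hsinh t * expR (- t)) @[t --> +oo] --> a * 0 + b / 2.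
  by rewrite mulr0 add0r.
exact: cvgD (cvgMr cvg_expRN_sqr) (cvgMr cvg_hsinh_mulexpRN).
Qed.

(* [hacosh s - t = ln (Y + sqrt (Y^2 - e^(-2t)))] with [Y = s e^(-t)]. *)
Lemma hacosh_sub_cvg s c : 0 < c -> s t * expR (- t) @[t --> +oo] --> c ->
  hacosh (s t) - t @[t --> +oo] --> ln (2 * c).
Proof.
move=> c0 Yc; set Y := fun t => s t * expR (- t).
have Zc : Num.sqrt (Y t ^+ 2 - expR (- t) ^+ 2) @[t --> +oo] --> c.
  have -> : c = Num.sqrt (c ^+ 2 - 0) by rewrite subr0 sqrtr_sqr ger0_norm // ltW.
  apply: (continuous_cvg _ (@sqrt_continuous R _)).
  apply: cvgB; last exact: cvg_expRN_sqr.
  by under eq_fun do rewrite expr2; rewrite expr2; apply: cvgM.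
have Xc : Y t + Num.sqrt (Y t ^+ 2 - expR (- t) ^+ 2) @[t --> +oo] --> 2 * c.
  by rewrite mulr_natl mulr2n; exact: cvgD.
apply: (cvg_trans _ (continuous_cvg _ (continuous_ln _) Xc)); last first.
  by rewrite mulr_gt0.
apply: near_eq_cvg; near=> t.
have Yt : 0 < Y t by near: t; exact: (cvgr_gt _ Yc _ c0).
have et := expR_gt0 (- t).
have st : 0 < s t by rewrite -(pmulr_lgt0 _ et).
have sqrtE : Num.sqrt (Y t ^+ 2 - expR (- t) ^+ 2) = Num.sqrt (s t ^+ 2 - 1) * expR (- t).
  have -> : Y t ^+ 2 - expR (- t) ^+ 2 = (s t ^+ 2 - 1) * expR (- t) ^+ 2 by rewrite /Y; ring.
  have [s1|s1] := leP 0 (s t ^+ 2 - 1).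
    by rewrite sqrtrM // sqrtr_sqr ger0_norm // ltW.
  by rewrite !ltr0_sqrtr ?mul0r // pmulr_llt0 // exprn_gt0.
rewrite /= sqrtE /Y -mulrDl lnM ?expRK ?posrE //.
by apply: ltr_pwDl => //; exact: sqrtr_ge0.
Unshelve. all: by end_near.
Qed.

Lemma sub_ln_cvg q : 0 < q ->
  t - ln (expR (- t) + q * hsinh t) @[t --> +oo] --> - ln (q / 2).
Proof.
move=> q0.
have lim : (expR (- t) + q * hsinh t) * expR (- t) @[t --> +oo] --> q / 2.
  by have := cvg_hsinh_comb 1 q; under eq_fun do rewrite mul1r.
apply: (cvg_trans _ (cvgN (continuous_cvg _ (continuous_ln _) lim))); last first.
  exact: divr_gt0.
apply: near_eq_cvg; near=> t.
have t0 : 0 < t by near: t; exact: nbhs_pinfty_gt.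
have := mulr_gt0 q0 (hsinh_gt0 _ t0); have := expR_gt0 (- t) => ? ?.
by rewrite /= !fctE /= lnM ?posrE ?expRK; lra.
Unshelve. all: by end_near.
Qed.

Implicit Types (x y z v : 'cV[R]_(n.+1)) (g : 'M[R]_(n.+1)).

Local Notation o := (hpt_o R n).
Local Notation "x `_t" := (x (tidx n) 0) (at level 2, format "x `_t").

Lemma minkE x y :
  mink x y = \sum_(i | i != tidx n) x i 0 * y i 0 - x`_t * y`_t.
Proof.
rewrite /mink /Jmx mul_mx_diag !mxE (bigD1 (tidx n)) //= !mxE eqxx.
rewrite addrC; congr (_ + _); last by rewrite mulrN1 mulNr.
by apply: eq_bigr => i /negbTE Hi; rewrite !mxE Hi mulr1.
Qed.

Lemma minkC x y : mink x y = mink y x.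
Proof. by rewrite !minkE; congr (_ - _); [apply: eq_bigr => i _|]; rewrite mulrC. Qed.

Lemma minkDr x y z : mink x (y + z) = mink x y + mink x z.
Proof. by rewrite /mink mulmxDr mxE. Qed.

Lemma minkZr x a y : mink x (a *: y) = a * mink x y.
Proof. by rewrite /mink -scalemxAr mxE. Qed.

Lemma minkBr x y z : mink x (y - z) = mink x y - mink x z.
Proof. by rewrite minkDr -scaleN1r minkZr mulN1r. Qed.

Lemma minkZl a x y : mink (a *: x) y = a * mink x y.
Proof. by rewrite minkC minkZr minkC. Qed.

Lemma minkBl x y z : mink (x - y) z = mink x z - mink y z.
Proof. by rewrite minkC minkBr !(minkC z). Qed.

Lemma mink_o z : mink o z = - z`_t.
Proof.
rewrite minkE big1 ?sub0r; last by move=> i /negbTE Hi; rewrite /hpt_o mxE Hi mul0r.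
by rewrite /hpt_o mxE !eqxx mul1r.
Qed.

Lemma mink_ge0 z : z`_t = 0 -> 0 <= mink z z.
Proof.
by move=> z0; rewrite minkE z0 mulr0 subr0; apply: sumr_ge0 => i _; rewrite -expr2 sqr_ge0.
Qed.

(* [lam *: x - y] has zero time component, hence non-negative Minkowski norm. *)
Lemma mink_amgm x y lam : lam * x`_t = y`_t ->
  2 * lam * mink x y <= lam ^+ 2 * mink x x + mink y y.
Proof.
move=> lamE; have := mink_ge0 (lam *: x - y).
rewrite !mxE lamE subrr => /(_ erefl).
rewrite minkBl !minkBr !minkZl !minkZr (minkC y x); lra.
Qed.

Lemma mink_future_le0 x y : 0 < x`_t -> 0 < y`_t ->
  mink x x <= 0 -> mink y y <= 0 -> mink x y <= 0.
Proof.
move=> xt yt xx yy; set lam := y`_t / x`_t.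
have lam0 : 0 < 2 * lam by rewrite mulr_gt0 ?divr_gt0.
have := mink_amgm x y lam (divfK (lt0r_neq0 xt) _).
have : lam ^+ 2 * mink x x <= 0 by rewrite mulr_ge0_le0 ?sqr_ge0.
rewrite -(pmulr_rle0 (mink x y) lam0); lra.
Qed.

Lemma mink_future_lt0 x y : 0 < x`_t -> 0 < y`_t ->
  mink x x < 0 -> mink y y <= 0 -> mink x y < 0.
Proof.
move=> xt yt xx yy; set lam := y`_t / x`_t.
have lam0 : 0 < 2 * lam by rewrite mulr_gt0 ?divr_gt0.
have := mink_amgm x y lam (divfK (lt0r_neq0 xt) _).
have : lam ^+ 2 * mink x x < 0 by rewrite pmulr_rlt0 // exprn_gt0 // divr_gt0.
rewrite -(pmulr_rlt0 (mink x y) lam0); lra.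
Qed.

Lemma mink_mulmx g x y : inG g -> mink (g *m x) (g *m y) = mink x y.
Proof.
case=> gJg _; rewrite /mink trmx_mul.
suff -> : x^T *m g^T *m Jmx R n *m (g *m y) = x^T *m (g^T *m Jmx R n *m g) *m y.
  by rewrite gJg.
by rewrite !mulmxA.
Qed.

Lemma inG_unitmx g : inG g -> g \in unitmx.
Proof. by case=> _ [detg _]; rewrite unitmxE detg unitr1. Qed.

Lemma mink_invmx g x y : inG g -> mink (invmx g *m x) y = mink x (g *m y).
Proof.
by move=> Gg; rewrite -(mink_mulmx _ _ y Gg) mulmxA mulmxV ?mul1mx ?inG_unitmx.
Qed.

(* G preserves the future light cone: [invmx g *m o] is a future timelike
   vector, and [(g *m v)_t = - <invmx g *m o, v>]. *)
Lemma in_bdry_mulmx {g v} : inG g -> in_bdry v -> in_bdry (g *m v).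
Proof.
move=> Gg [vv vt]; split; first by rewrite mink_mulmx.
have o_t : o`_t = 1 by rewrite /hpt_o mxE !eqxx.
have xx : mink (invmx g *m o) (invmx g *m o) = -1.
  by rewrite mink_invmx // mulmxA mulmxV ?mul1mx ?inG_unitmx // mink_o o_t.
have xt : 0 < (invmx g *m o)`_t.
  rewrite -[_`_t]opprK -mink_o minkC mink_invmx // mink_o opprK /hpt_o -colE mxE.
  by case: Gg => _ [].
rewrite -[_`_t]opprK -mink_o -mink_invmx // oppr_gt0.
by apply: mink_future_lt0 => //; rewrite ?xx ?ltrN10 ?vv.
Qed.

Lemma mink_gray x v t :
  - mink x (gray o v t) = x`_t * expR (- t) + (- mink x v / v`_t) * hsinh t.
Proof.
rewrite /gray minkDr !minkZr minkBr minkZr (minkC x o) !mink_o opprK hcoshE; ring.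
Qed.

Lemma hdist_gray_sub_cvg x v : 0 < v`_t -> 0 < - mink x v ->
  hdist x (gray o v t) - t @[t --> +oo] --> ln (- mink x v / v`_t).
Proof.
move=> vt xv; set b := - mink x v / v`_t; have b0 : 0 < b by exact: divr_gt0.
suff : hacosh (- mink x (gray o v t)) - t @[t --> +oo] --> ln (2 * (b / 2)).
  by rewrite mulrC divfK.
under eq_fun do rewrite mink_gray.
apply: hacosh_sub_cvg; first exact: divr_gt0.
exact: cvg_hsinh_comb.
Qed.

Lemma busemannE v x y : 0 < v`_t -> 0 < - mink x v -> 0 < - mink y v ->
  busemann v x y = ln (- mink x v) - ln (- mink y v).
Proof.
move=> vt xv yv; rewrite /busemann; apply: cvg_lim => //.
have -> : ln (- mink x v) - ln (- mink y v) =
    ln (- mink x v / v`_t) - ln (- mink y v / v`_t).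
  by rewrite !lnM ?posrE ?invr_gt0 //; lra.
suff -> : (fun t => hdist x (gray o v t) - hdist y (gray o v t)) =
    (fun t => (hdist x (gray o v t) - t) - (hdist y (gray o v t) - t)).
  exact: cvgB (hdist_gray_sub_cvg _ _ vt xv) (hdist_gray_sub_cvg _ _ vt yv).
by apply/funext => t; lra.
Qed.

Lemma busemann_sum_gray v1 v2 q t : in_bdry v1 -> in_bdry v2 ->
  - mink v1 v2 = q * (v1`_t * v2`_t) -> 0 <= q -> 0 < t ->
  busemann v1 o (gray o v1 t) + busemann v2 o (gray o v1 t) =
  t - ln (expR (- t) + q * hsinh t).
Proof.
move=> [v11 v1t] [_ v2t] qE q0 t0.
have E0 : 0 < expR (- t) + q * hsinh t.
  by have := mulr_ge0 q0 (ltW (hsinh_gt0 _ t0)); have := expR_gt0 (- t); lra.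
have o1 : - mink o v1 = v1`_t by rewrite mink_o opprK.
have o2 : - mink o v2 = v2`_t by rewrite mink_o opprK.
have z1 : - mink (gray o v1 t) v1 = v1`_t * expR (- t).
  by rewrite minkC mink_gray v11 oppr0 !mul0r addr0.
have z2 : - mink (gray o v1 t) v2 = v2`_t * (expR (- t) + q * hsinh t).
  by rewrite minkC mink_gray (minkC v2) qE; field; rewrite gt_eqF.
rewrite !busemannE ?o1 ?o2 ?z1 ?z2 ?mulr_gt0 ?expR_gt0 //.
by rewrite !lnM ?posrE ?expR_gt0 // expRK; lra.
Qed.

Lemma gromov_sqr v1 v2 : in_bdry v1 -> in_bdry v2 ->
  gromov v1 v2 ^+ 2 = - mink v1 v2 / (2 * (v1`_t * v2`_t)).
Proof.
move=> b1 b2; have [v11 v1t] := b1; have [v22 v2t] := b2.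
have v12 : v1`_t * v2`_t != 0 by rewrite mulf_neq0 // gt_eqF.
set q := - mink v1 v2 / (v1`_t * v2`_t).
have qE : - mink v1 v2 = q * (v1`_t * v2`_t) by rewrite divfK.
have q0 : 0 <= q.
  apply: divr_ge0; last exact: ltW (mulr_gt0 v1t v2t).
  by rewrite oppr_ge0 mink_future_le0 // ?v11 ?v22.
have -> : - mink v1 v2 / (2 * (v1`_t * v2`_t)) = q / 2.
  by rewrite qE; field; rewrite !gt_eqF.
set f := fun t => busemann v1 o (gray o v1 t) + busemann v2 o (gray o v1 t).
have fE : \forall t \near +oo, f t = t - ln (expR (- t) + q * hsinh t).
  near=> t; have t0 : 0 < t by near: t; exact: nbhs_pinfty_gt.
  by rewrite /f (busemann_sum_gray _ _ _ _ b1 b2 qE q0 t0).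
rewrite /gromov -/f; have [q_eq0|q_neq0] := eqVneq q 0.
- have -> : lim ((f t)%:E @[t --> +oo]) = +oo%E.
    apply: cvg_lim => //; apply: (cvg_trans (near_eq_cvg _)).
      by apply: filterS fE => t /= ->.
    apply/cvgeryP/cvgryPge => A; near=> t.
    rewrite q_eq0 mul0r addr0 expRK opprK.
    have : A <= t by near: t; apply: nbhs_pinfty_ge; rewrite num_real.
    have : 0 <= t by near: t; apply: nbhs_pinfty_ge; rewrite num_real.
    lra.
  by rewrite /= mulNyr gtr0_sg ?invr_gt0 // mul1e /= q_eq0 mul0r expr0n.
- have q_gt0 : 0 < q by rewrite lt0r q_neq0.
  have -> : lim ((f t)%:E @[t --> +oo]) = (- ln (q / 2))%:E.
    apply: cvg_lim => //; apply: (cvg_trans (near_eq_cvg _)).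
      by apply: filterS fE => t /= ->.
    by apply: cvg_EFin; [exact: nearW | exact: sub_ln_cvg].
  rewrite /= opprK -expRM_natl.
  have -> : 2%:R * (ln (q / 2) / 2) = ln (q / 2) by field.
  by rewrite lnK // posrE divr_gt0.
Unshelve. all: by end_near.
Qed.

Lemma bheightE inf g xi : in_bdry inf -> inG g -> inG xi ->
  bheight inf g xi = (g *m (xi *m inf))`_t / (xi *m inf)`_t.
Proof.
move=> binf Gg Gxi; have [_ wt] := in_bdry_mulmx Gxi binf.
have [_ gwt] := in_bdry_mulmx Gg (in_bdry_mulmx Gxi binf).
have ow : - mink o (xi *m inf) = (xi *m inf)`_t by rewrite mink_o opprK.
have gow : - mink (invmx g *m o) (xi *m inf) = (g *m (xi *m inf))`_t.
  by rewrite mink_invmx // mink_o opprK.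
by rewrite /bheight busemannE ?ow ?gow // expRD expRN !lnK ?posrE.
Qed.

Lemma gromov_sqr_mul_bheight {inf g1 g2 xi1 xi2} :
  in_bdry inf -> inG g1 -> inG g2 -> inG xi1 -> inG xi2 ->
  gromov (g1 *m xi1 *m inf) (g2 *m xi2 *m inf) ^+ 2
    * bheight inf g1 xi1 * bheight inf g2 xi2
  = - mink (g1 *m (xi1 *m inf)) (g2 *m (xi2 *m inf))
      / (2 * ((xi1 *m inf)`_t * (xi2 *m inf)`_t)).
Proof.
move=> binf Gg1 Gg2 Gxi1 Gxi2.
have b1 := in_bdry_mulmx Gxi1 binf; have b2 := in_bdry_mulmx Gxi2 binf.
have gb1 := in_bdry_mulmx Gg1 b1; have gb2 := in_bdry_mulmx Gg2 b2.
have [[_ w1t] [_ w2t]] := (b1, b2); have [[_ gw1t] [_ gw2t]] := (gb1, gb2).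
rewrite !bheightE // -!mulmxA gromov_sqr //.
by field; rewrite (gt_eqF w1t) (gt_eqF w2t) (gt_eqF gw1t) (gt_eqF gw2t).
Qed.

End Hyperboloid.

Theorem proposition3p7 (R : realType) (n : nat) (hn : (2 <= n)%N)
  (inf : 'cV[R]_(n.+1)) (hinf : in_bdry inf)
  (Gam : set 'M[R]_(n.+1)) (hGsub : subgroupG Gam) (hGdisc : discrete_set Gam)
  (Xi : seq 'M[R]_(n.+1)) (hXiG : forall xi, xi \in Xi -> inG xi)
  (hXi1 : 1%:M \in Xi)
  (g g1 g2 xi1 xi2 : 'M[R]_(n.+1))
  (hg : Gam g) (hg1 : Gam g1) (hg2 : Gam g2)
  (hxi1 : xi1 \in Xi) (hxi2 : xi2 \in Xi) :
  gromov (g1 *m xi1 *m inf) (g2 *m xi2 *m inf) ^+ 2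
    * bheight inf g1 xi1 * bheight inf g2 xi2
  = gromov (g *m g1 *m xi1 *m inf) (g *m g2 *m xi2 *m inf) ^+ 2
    * bheight inf (g *m g1) xi1 * bheight inf (g *m g2) xi2.
Proof.
have [GamG [_ [Gam_mul _]]] := hGsub.
have Gxi1 := hXiG _ hxi1; have Gxi2 := hXiG _ hxi2.
have [[Gg Gg1] Gg2] := (GamG _ hg, GamG _ hg1, GamG _ hg2).
have [Ggg1 Ggg2] := (GamG _ (Gam_mul _ _ hg hg1), GamG _ (Gam_mul _ _ hg hg2)).
rewrite [LHS](gromov_sqr_mul_bheight _ _ hinf Gg1 Gg2 Gxi1 Gxi2).
rewrite [RHS](gromov_sqr_mul_bheight _ _ hinf Ggg1 Ggg2 Gxi1 Gxi2).
by rewrite -!(mulmxA g) mink_mulmx.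
Qed.
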